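(* Let $R$ be a (unital, not necessarily associative) ring and let $\sigma\colon R\to R$ be an additive bijection with $\sigma(1)=1$. If $R$ is left Noetherian, then the non-associative skew Laurent polynomial ring $R[X^{\pm};\sigma]$ is left Noetherian. Likewise, if $R$ is right Noetherian, then $R[X^{\pm};\sigma]$ is right Noetherian.
   Context: All rings are unital but not necessarily associative. A left (right) ideal of a non-associative ring $S$ is an additive subgroup $I$ with $sI\subseteq I$ ($Is\subseteq I$) for all $s\in S$. $S$ is left (right) Noetherian if it satisfies the ascending chain condition on left (right) ideals. For a non-associative ring $R$ and an additive bijection $\sigma\colon R\to R$ with $\sigma(1)=1$, the non-associative skew Laurent polynomial ring $R[X^{\pm};\sigma]$ is the additive group of formal sums $\sum_{i\in\mathbb{Z}} r_iX^i$ with $r_i\in R$, all but finitely many zero, with pointwise addition and multiplication given by the biadditive extension of $(rX^m)(sX^n)=(r\sigma^m(s))X^{m+n}$ for $r,s\in R$, $m,n\in\mathbb{Z}$ (here $\sigma^m$ for $m<0$ denotes a power of $\sigma^{-1}$). *)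

From mathcomp Require Import all_boot all_order all_algebra.
From mathcomp Require Import boolp classical_sets fsbigop.
Set Implicit Arguments. Unset Strict Implicit. Unset Printing Implicit Defensive.
Import GRing.Theory.
Local Open Scope classical_set_scope.
Local Open Scope ring_scope.

Definition nonassoc_ring (R : zmodType) (mul : R -> R -> R) (one : R) : Prop :=
  [/\ left_distributive mul +%R, right_distributive mul +%R,
      left_id one mul & right_id one mul].

Section Generic.
Variables (T : Type) (C : T -> Prop) (zero : T) (add : T -> T -> T)
          (opp : T -> T) (mul : T -> T -> T).

Definition additive_subgroup (I : T -> Prop) : Prop :=
  [/\ forall x, I x -> C x, I zero,
      forall x y, I x -> I y -> I (add x y) & forall x, I x -> I (opp x)].

Definition left_ideal (I : T -> Prop) : Prop :=
  additive_subgroup I /\ forall s x, C s -> I x -> I (mul s x).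

Definition right_ideal (I : T -> Prop) : Prop :=
  additive_subgroup I /\ forall s x, C s -> I x -> I (mul x s).

Definition acc_on (ideal : (T -> Prop) -> Prop) : Prop :=
  forall I : nat -> T -> Prop,
    (forall n, ideal (I n)) -> (forall n x, I n x -> I n.+1 x) ->
    exists N : nat, forall n, (N <= n)%N -> forall x, I n x <-> I N x.

Definition left_noetherian := acc_on left_ideal.
Definition right_noetherian := acc_on right_ideal.
End Generic.

Definition ring_left_noetherian (R : zmodType) (mul : R -> R -> R) : Prop :=
  left_noetherian (fun _ : R => True) 0 +%R (fun x => - x) mul.
Definition ring_right_noetherian (R : zmodType) (mul : R -> R -> R) : Prop :=
  right_noetherian (fun _ : R => True) 0 +%R (fun x => - x) mul.

Section Laurent.
Variables (R : zmodType) (mul : R -> R -> R) (sigma sigmainv : R -> R).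

Definition spow (m : int) : R -> R :=
  match m with
  | Posz n => iter n sigma
  | Negz n => iter n.+1 sigmainv
  end.

(* an element sum_i r_i X^i is its coefficient function i |-> r_i,
   required to have finite support *)
Definition fin_supp (f : int -> R) : Prop :=
  exists N : nat, forall i : int, (N < `|i|)%N -> f i = 0.

Definition ladd (f g : int -> R) : int -> R := fun i => f i + g i.
Definition lopp (f : int -> R) : int -> R := fun i => - f i.
Definition lzero : int -> R := fun _ => 0.

(* (r X^m)(s X^n) = (r sigma^m(s)) X^(m+n), extended biadditively:
   coefficient of X^k in f*g is sum_m f_m sigma^m(g_(k-m)) *)
Definition lmul (f g : int -> R) : int -> R :=
  fun k => \sum_(m \in [set: int]) mul (f m) (spow m (g (k - m))).

Definition laurent_left_noetherian : Prop :=
  left_noetherian fin_supp lzero ladd lopp lmul.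
Definition laurent_right_noetherian : Prop :=
  right_noetherian fin_supp lzero ladd lopp lmul.
End Laurent.

From mathcomp Require Import all_boot all_order all_algebra.
From mathcomp Require Import boolp classical_sets fsbigop zify.
Set Implicit Arguments. Unset Strict Implicit. Unset Printing Implicit Defensive.
Import GRing.Theory.
Local Open Scope classical_set_scope.
Local Open Scope ring_scope.

(* The Hilbert basis argument.  For an ideal J of S = R[X^{+-};sigma] and n,
   the coefficients at X^0 of the elements of J supported in degrees [-n, 0]
   form an ideal of R: only products with monomials r X^0 and 1 X^k are
   needed, and these do not involve associativity.  Multiplying by 1 X^k on
   the relevant side shifts coefficients by k (twisted by sigma^k on the
   left), so every element can be moved into negative degrees; peeling off
   top coefficients shows that nested ideals J <= J' with the same
   leading-coefficient ideals for every n coincide.  ACC on R, applied to the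
   diagonal chain and to finitely many rows of the doubly indexed family of
   leading-coefficient ideals of an ascending chain, then yields ACC on S. *)

Lemma fsbig_setT_single (R : zmodType) (F : int -> R) p :
  (forall m, m != p -> F m = 0) -> \sum_(m \in [set: int]) F m = F p.
Proof.
move=> F0; rewrite -(fsbig_widen [set p]) ?fsbig_set1 // => m [_ /= /eqP].
exact: F0.
Qed.

Lemma iter_cancel (T : Type) (f g : T -> T) n :
  cancel g f -> cancel (iter n g) (iter n f).
Proof. by move=> gK; elim: n => // n IH x; rewrite iterSr iterS gK IH. Qed.

Section AscendingChains.
Variables (T : Type) (ideal : (T -> Prop) -> Prop).

Lemma chain_mono (I : nat -> T -> Prop) m n x :
  (forall n x, I n x -> I n.+1 x) -> (m <= n)%N -> I m x -> I n x.
Proof.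
move=> Iinc /subnKC <-; elim: (n - m)%N => [|d IH] Ix; first by rewrite addn0.
by rewrite addnS; apply/Iinc/IH.
Qed.

Lemma acc_on_stable_below (C : nat -> nat -> T -> Prop) :
  acc_on ideal -> (forall n k, ideal (C n k)) ->
  (forall n k x, C n k x -> C n k.+1 x) ->
  forall m, exists M, forall n, (n < m)%N ->
    forall k, (M <= k)%N -> forall x, C n k x -> C n M x.
Proof.
move=> acc Cideal Cinc; elim=> [|m [M IH]]; first by exists 0%N.
have [Nm row_m_stable] := acc (C m) (Cideal m) (Cinc m).
exists (maxn M Nm) => n; rewrite ltnS leq_eqVlt => /predU1P[-> | n_lt] k k_ge x Cx.
  apply: chain_mono (Cinc m) (leq_maxr _ _) _; apply/(row_m_stable k _ x) => //; lia.
apply: chain_mono (Cinc n) (leq_maxl _ _) _; apply: (IH n n_lt k) => //; lia.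
Qed.

End AscendingChains.

Section LeadingCoefficients.
Variable R : zmodType.

Definition supported_in (lo hi : int) (f : int -> R) : Prop :=
  forall i, i < lo \/ hi < i -> f i = 0.

Definition lead_coefs (J : (int -> R) -> Prop) (n : nat) : R -> Prop :=
  fun x => exists g, [/\ J g, supported_in (- n%:Z) 0 g & g 0 = x].

Lemma lead_coefs_mono (J J' : (int -> R) -> Prop) n n' x :
  (forall f, J f -> J' f) -> (n <= n')%N -> lead_coefs J n x -> lead_coefs J' n' x.
Proof.
move=> JJ' le_nn' [g [Jg g_supp g0]]; exists g; split=> // [|i i_out].
  exact: JJ'.
by apply: g_supp; lia.
Qed.

Lemma lead_coefs_subgroup J n :
  additive_subgroup (@fin_supp R) (lzero R) (@ladd R) (@lopp R) J ->
  additive_subgroup (fun _ => True) 0 +%R (fun x => - x) (lead_coefs J n).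
Proof.
case=> _ J0 JD JN; split=> //.
- by exists (lzero R).
- move=> _ _ [g [Jg g_supp <-]] [h [Jh h_supp <-]]; exists (ladd g h).
  split=> // [|i i_out]; first exact: JD.
  by rewrite /ladd g_supp ?h_supp ?addr0.
- move=> _ [g [Jg g_supp <-]]; exists (lopp g).
  split=> // [|i i_out]; first exact: JN.
  by rewrite /lopp g_supp ?oppr0.
Qed.

Variable phi : int -> R -> R.
Hypothesis phiK : forall k x, phi k (phi (- k) x) = x.
Hypothesis phi0 : forall k, phi k 0 = 0.

Definition shift (k : int) (f : int -> R) : int -> R := fun i => phi k (f (i - k)).

Lemma shiftK k f : shift k (shift (- k) f) = f.
Proof. by apply/funext => i; rewrite /shift opprK subrK phiK. Qed.

Lemma supported_shift lo hi k f :
  supported_in lo hi f -> supported_in (lo + k) (hi + k) (shift k f).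
Proof. by move=> f_supp i i_out; rewrite /shift f_supp ?phi0 //; lia. Qed.

Variables (Rideal : (R -> Prop) -> Prop) (ideal : ((int -> R) -> Prop) -> Prop).
Hypothesis ideal_subgroup :
  forall J, ideal J -> additive_subgroup (@fin_supp R) (lzero R) (@ladd R) (@lopp R) J.
Hypothesis ideal_shift : forall J k f, ideal J -> J f -> J (shift k f).
Hypothesis lead_coefs_ideal : forall J n, ideal J -> Rideal (lead_coefs J n).

Section Nested.
Variables J J' : (int -> R) -> Prop.
Hypotheses (idealJ : ideal J) (idealJ' : ideal J').
Hypothesis JJ' : forall f, J f -> J' f.
Hypothesis lead_coefsJ'J : forall n x, lead_coefs J' n x -> lead_coefs J n x.

Lemma lead_coefs_sub_supported n d :
  J' d -> supported_in (- n%:Z) (-1) d -> J d.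
Proof.
have [_ J0 JD JN] := ideal_subgroup idealJ.
have [_ _ J'D J'N] := ideal_subgroup idealJ'.
elim: n d => [|n IH] d J'd d_supp.
  by have -> : d = lzero R by apply/funext => i; apply: d_supp; lia.
pose e := shift 1 d.
have J'e : J' e := ideal_shift 1 idealJ' J'd.
have e_supp : supported_in (- n%:Z) 0 e.
  by move=> i i_out; apply: (supported_shift d_supp); lia.
have [h [Jh h_supp h0]] : lead_coefs J n (e 0) by apply: lead_coefsJ'J; exists e.
have Je_h : J (ladd e (lopp h)).
  apply: IH; first exact: J'D J'e (J'N _ (JJ' Jh)).
  move=> i i_out; rewrite /ladd /lopp.
  have [->|i_neq0] := eqVneq i 0; first by rewrite h0 subrr.
  by rewrite e_supp ?h_supp ?subrr //; lia.
have Je : J e.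
  have -> : e = ladd (ladd e (lopp h)) h.
    by apply/funext => i; rewrite /ladd /lopp subrK.
  exact: JD.
by rewrite -[d](shiftK (-1)) opprK; apply: ideal_shift.
Qed.

Lemma lead_coefs_sub f : J' f -> J f.
Proof.
move=> J'f; have [J'_fin_supp _ _ _] := ideal_subgroup idealJ'.
have [N f_bound] := J'_fin_supp f J'f.
rewrite -(shiftK N.+1 f); apply: ideal_shift => //.
apply: (@lead_coefs_sub_supported (N + N).+1); first exact: ideal_shift.
by move=> i i_out; rewrite /shift f_bound ?phi0 //; lia.
Qed.

End Nested.

Theorem acc_on_laurent : acc_on Rideal -> acc_on ideal.
Proof.
move=> acc J idealJ Jinc.
have Jmono k k' f : (k <= k')%N -> J k f -> J k' f by move=> ?; apply: chain_mono.
have coefs_mono n n' k k' x : (n <= n')%N -> (k <= k')%N ->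
    lead_coefs (J k) n x -> lead_coefs (J k') n' x.
  by move=> le_n le_k; apply: lead_coefs_mono le_n => f; apply: Jmono.
have [m diag_stable] := acc (fun k => lead_coefs (J k) k)
  (fun k => lead_coefs_ideal k (idealJ k))
  (fun k x => coefs_mono _ _ _ _ x (leqnSn k) (leqnSn k)).
have [M rows_stable] := acc_on_stable_below (C := fun n k => lead_coefs (J k) n) acc
  (fun n k => lead_coefs_ideal n (idealJ k))
  (fun n k x => coefs_mono _ _ _ _ x (leqnn n) (leqnSn k)) m.
exists (maxn m M) => n le_Nn f; split; last exact: Jmono.
apply: lead_coefs_sub => // [g|n0 x coefs_x]; first exact: Jmono.
have [lt_n0m | le_mn0] := ltnP n0 m.
  apply: coefs_mono (leqnn n0) (leq_maxr m M) _.
  by apply: (rows_stable n0 lt_n0m n) => //; lia.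
(* the row n0 >= m is dominated by the diagonal, which is stable from m on *)
apply: (coefs_mono _ _ _ _ _ le_mn0 (leq_maxl m M)).
apply/(diag_stable (maxn n0 n)); first lia.
exact: coefs_mono (leq_maxl _ _) (leq_maxr _ _) coefs_x.
Qed.

End LeadingCoefficients.

Section SkewLaurent.
Variables (R : zmodType) (mul : R -> R -> R) (one : R) (sigma sigmainv : R -> R).
Hypothesis ring_mul : nonassoc_ring mul one.
Hypothesis sigmaD : {morph sigma : x y / x + y}.
Hypotheses (sigmaK : cancel sigma sigmainv) (sigmainvK : cancel sigmainv sigma).
Hypothesis sigma1 : sigma one = one.

Lemma mul0x x : mul 0 x = 0.
Proof.
by case: ring_mul => mulDl _ _ _; apply: (addrI (mul 0 x)); rewrite -mulDl !addr0.
Qed.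

Lemma mulx0 x : mul x 0 = 0.
Proof.
by case: ring_mul => _ mulDr _ _; apply: (addrI (mul x 0)); rewrite -mulDr !addr0.
Qed.

Lemma mul1x x : mul one x = x. Proof. by case: ring_mul. Qed.

Lemma mulx1 x : mul x one = x. Proof. by case: ring_mul. Qed.

Local Notation sp := (spow sigma sigmainv).

Lemma spow0 k : sp k 0 = 0.
Proof.
have sigma0 : sigma 0 = 0 by apply: (addrI (sigma 0)); rewrite -sigmaD !addr0.
have sigmainv0 : sigmainv 0 = 0 by rewrite -{1}sigma0 sigmaK.
by case: k => n; apply: iter_fix.
Qed.

Lemma spow1 k : sp k one = one.
Proof.
have sigmainv1 : sigmainv one = one by rewrite -{1}sigma1 sigmaK.
by case: k => n; apply: iter_fix.
Qed.

Lemma spowK k x : sp k (sp (- k) x) = x.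
Proof. by case: k => [[|n]|n] //=; rewrite -!iterS; apply: iter_cancel. Qed.

Definition monomial (r : R) (p : int) : int -> R := fun i => if i == p then r else 0.

Lemma monomial_fin_supp r p : fin_supp (monomial r p).
Proof. by exists `|p|%N => i i_gt; rewrite /monomial; case: eqP => // i_p; lia. Qed.

Lemma lmul_monomiall r p g :
  lmul mul sigma sigmainv (monomial r p) g = fun i => mul r (sp p (g (i - p))).
Proof.
apply/funext => i; rewrite /lmul (fsbig_setT_single (p := p)) /monomial ?eqxx //.
by move=> m /negbTE ->; apply: mul0x.
Qed.

Lemma lmul_monomialr r p g :
  lmul mul sigma sigmainv g (monomial r p) = fun i => mul (g (i - p)) (sp (i - p) r).
Proof.
apply/funext => i; rewrite /lmul (fsbig_setT_single (p := i - p)) /monomial.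
  by rewrite subKr eqxx.
move=> m m_neq; case: eqP => [i_m|_]; last by rewrite spow0 mulx0.
by move: m_neq; rewrite -i_m subKr eqxx.
Qed.

Lemma lmul_monomial1l p g :
  lmul mul sigma sigmainv (monomial one p) g = shift sp p g.
Proof. by rewrite lmul_monomiall; apply/funext => i; rewrite mul1x. Qed.

Lemma lmul_monomial1r p g :
  lmul mul sigma sigmainv g (monomial one p) = shift (fun _ x => x) p g.
Proof. by rewrite lmul_monomialr; apply/funext => i; rewrite spow1 mulx1. Qed.

Lemma laurent_left_noetherian_of :
  ring_left_noetherian mul -> laurent_left_noetherian mul sigma sigmainv.
Proof.
apply: (acc_on_laurent spowK spow0) => [J [] // | J k f [_ J_mul] Jf | J n idealJ].
  by rewrite -lmul_monomial1l; apply: J_mul (monomial_fin_supp one k) Jf.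
case: (idealJ) => subJ J_mul; split; first exact: lead_coefs_subgroup.
move=> r _ _ [g [Jg g_supp <-]]; exists (lmul mul sigma sigmainv (monomial r 0) g).
split; first exact: J_mul (monomial_fin_supp r 0) Jg.
  by move=> i i_out; rewrite lmul_monomiall subr0 g_supp ?mulx0.
by rewrite lmul_monomiall.
Qed.

Lemma laurent_right_noetherian_of :
  ring_right_noetherian mul -> laurent_right_noetherian mul sigma sigmainv.
Proof.
apply: (@acc_on_laurent _ (fun _ x => x))
  => [// | // | J [] // | J k f [_ J_mul] Jf | J n idealJ].
  by rewrite -lmul_monomial1r; apply: J_mul (monomial_fin_supp one k) Jf.
case: (idealJ) => subJ J_mul; split; first exact: lead_coefs_subgroup.
move=> r _ _ [g [Jg g_supp <-]]; exists (lmul mul sigma sigmainv g (monomial r 0)).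
split; first exact: J_mul (monomial_fin_supp r 0) Jg.
  by move=> i i_out; rewrite lmul_monomialr subr0 g_supp ?mul0x.
by rewrite lmul_monomialr subr0.
Qed.

End SkewLaurent.

Theorem theorem6 (R : zmodType) (mul : R -> R -> R) (one : R)
    (sigma sigmainv : R -> R) :
  nonassoc_ring mul one ->
  {morph sigma : x y / x + y} ->
  cancel sigma sigmainv -> cancel sigmainv sigma ->
  sigma one = one ->
  (ring_left_noetherian mul -> laurent_left_noetherian mul sigma sigmainv) /\
  (ring_right_noetherian mul -> laurent_right_noetherian mul sigma sigmainv).
Proof.
move=> ring_mul sigmaD sigmaK sigmainvK sigma1; split.
  exact: laurent_left_noetherian_of ring_mul sigmaD sigmaK sigmainvK.
exact: laurent_right_noetherian_of ring_mul sigmaD sigmaK sigma1.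
Qed.
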